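(* Let ${\cal I}_1,\dots,{\cal I}_k$ ($k\ge 2$) be nonempty subsets of $E$ and let $\widetilde\lessdot$ be the restriction of $\lessdot$ to the $2k$ handles $\mathrm{LH}({\cal I}_i),\mathrm{UH}({\cal I}_i)$, $i=1,\dots,k$ (assume these $2k$ endpoints are distinct). Then: (i) if the two $\widetilde\lessdot$-smallest handles are lower handles $\mathrm{LH}({\cal I}_i)$ and $\mathrm{LH}({\cal I}_j)$ with $i\ne j$, then no ${\cal I}_t$ is minimal; (ii) if the $\widetilde\lessdot$-smallest handle is $\mathrm{LH}({\cal I}_i)$, then no ${\cal I}_t$ with $t\neq i$ is minimal, and ${\cal I}_i$ is minimal iff no $\mathrm{LH}({\cal I}_j)$ with $j\ne i$ satisfies $\mathrm{LH}({\cal I}_j)\lessdot\mathrm{UH}({\cal I}_i)$; (iii) if $\widetilde\lessdot$ begins with a maximal initial block of upper handles $\mathrm{UH}({\cal I}_{i_1}),\dots,\mathrm{UH}({\cal I}_{i_s})$ ($s\ge1$) followed by the lower handle $\mathrm{LH}({\cal I}_j)$, then each ${\cal I}_{i_1},\dots,{\cal I}_{i_s}$ is minimal, ${\cal I}_j$ is minimal iff no lower handle $\mathrm{LH}({\cal I}_t)$ with $t\ne j$ satisfies $\mathrm{LH}({\cal I}_t)\lessdot\mathrm{UH}({\cal I}_j)$, and no other ${\cal I}_t$ is minimal.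
   Context: Let $E$ be a finite set and for each $a\in E$ let $I_a=(\ell_a,r_a)$ be a nonempty open real interval, $\ell_a<r_a$; define $a\vartriangleleft b$ iff $r_a\le\ell_b$ (an interval order). Let $\lessdot$ be the linear ordering of all endpoints $\ell_a,r_a$ by real value from left to right, where among endpoints with equal real value all right endpoints come first (arbitrary order among them) and then all left endpoints (arbitrary order). For nonempty ${\cal I}_1,{\cal I}_2\subseteq E$, ${\cal I}_1\vartriangleleft{\cal I}_2$ means there exist $a\in{\cal I}_1$, $b\in{\cal I}_2$ with $a\vartriangleleft b$. For nonempty ${\cal I}\subseteq E$, $\mathrm{LH}({\cal I})$ is the $\lessdot$-minimum of $\{r_x:x\in{\cal I}\}$ and $\mathrm{UH}({\cal I})$ is the $\lessdot$-maximum of $\{\ell_x:x\in{\cal I}\}$. Among ${\cal I}_1,\dots,{\cal I}_k$, ${\cal I}_j$ is minimal if there is no $i\ne j$ with ${\cal I}_i\vartriangleleft{\cal I}_j$. *)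

(* Reals are abstracted as an arbitrary realFieldType R
   (only order comparisons of endpoints are used). *)
From HB Require Import structures.
From mathcomp Require Import all_boot all_order all_algebra.
Set Implicit Arguments. Unset Strict Implicit. Unset Printing Implicit Defensive.
Import Order.TTheory GRing.Theory Num.Theory.
Local Open Scope ring_scope.

(* An endpoint of the interval I_a = (ell a, r a) is a pair (a, b) with
   b = true for the right endpoint r_a and b = false for the left endpoint ell_a. *)
Definition endpoint (E : finType) := (E * bool)%type.

Definition epval (R : realFieldType) (E : finType) (ell r : E -> R)
  (p : endpoint E) : R := if p.2 then r p.1 else ell p.1.

(* The linear order "lessdot" on all endpoints is encoded by an injective rank
   function rk (p lessdot q iff rk p < rk q), which must order endpoints by real
   value, and among endpoints with equal value put all right endpoints before all
   left endpoints; otherwise the order is arbitrary. *)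
Definition lessdot_rank (R : realFieldType) (E : finType) (ell r : E -> R)
  (rk : endpoint E -> nat) : Prop :=
  [/\ injective rk,
      (forall p q, epval ell r p < epval ell r q -> (rk p < rk q)%N) &
      (forall p q, epval ell r p = epval ell r q -> p.2 = true -> q.2 = false ->
                   (rk p < rk q)%N)].

Definition ivl_prec (R : realFieldType) (E : finType) (ell r : E -> R) (a b : E) : Prop :=
  r a <= ell b.

Definition set_prec (R : realFieldType) (E : finType) (ell r : E -> R)
  (I1 I2 : {set E}) : Prop :=
  exists a b, [/\ a \in I1, b \in I2 & ivl_prec ell r a b].

Definition minimal_in (R : realFieldType) (E : finType) (ell r : E -> R)
  (k : nat) (I : 'I_k -> {set E}) (j : 'I_k) : Prop :=
  ~ exists i, i != j /\ set_prec ell r (I i) (I j).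

Definition is_LH (E : finType) (rk : endpoint E -> nat) (A : {set E})
  (p : endpoint E) : Prop :=
  [/\ p.2 = true, p.1 \in A & forall y, y \in A -> (rk p <= rk (y, true))%N].

Definition is_UH (E : finType) (rk : endpoint E -> nat) (A : {set E})
  (p : endpoint E) : Prop :=
  [/\ p.2 = false, p.1 \in A & forall y, y \in A -> (rk (y, false) <= rk p)%N].

From HB Require Import structures.
From mathcomp Require Import all_boot all_order all_algebra.
Import Order.TTheory GRing.Theory Num.Theory.
Local Open Scope ring_scope.

(* Everything rests on one characterisation: for sets of
   intervals A and B with handles,  A <| B  holds iff  LH(A) precedes UH(B)
   in the endpoint order.  Indeed, since the rank of an endpoint is monotone in its
   real value, LH(A) carries the least right endpoint value of A and UH(B)
   the greatest left endpoint value of B; so some a in A lies before some b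
   in B iff  r(LH(A)) <= ell(UH(B)), and with the tie-breaking rule (right
   endpoints before left ones) this is exactly "LH(A) lessdot UH(B)".
   Consequently  I_t  is minimal iff no lower handle of another I_s precedes
   UH(I_t).  The three statements of the theorem then only compare handle
   ranks: a set is non-minimal as soon as a foreign lower handle comes before
   its upper handle, and minimal when its upper handle precedes every lower
   handle.  The one extra fact needed is that a lower and an upper handle
   never have the same rank, as they are distinct endpoints. *)

Section Handles.

Context {R : realFieldType} {E : finType} {ell r : E -> R}.
Context {rk : endpoint E -> nat}.
Hypothesis hrk : lessdot_rank ell r rk.

Lemma rank_le_val (p q : endpoint E) :
  (rk p <= rk q)%N -> epval ell r p <= epval ell r q.
Proof.
case: hrk => _ rk_lt _ le_pq; rewrite leNgt; apply/negP => /rk_lt.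
by rewrite ltnNge le_pq.
Qed.

Lemma rank_right_left_neq (p q : endpoint E) :
  p.2 = true -> q.2 = false -> rk p <> rk q.
Proof.
case: hrk => rk_inj _ _ p2 q2 /rk_inj epq.
by move: p2; rewrite epq q2.
Qed.

Lemma LH_val_min {A : {set E}} {p : endpoint E} {y : E} :
  is_LH rk A p -> y \in A -> r p.1 <= r y.
Proof.
case: p => a b [/= -> _ pmin] yA.
exact: (rank_le_val (a, true) (y, true) (pmin y yA)).
Qed.

Lemma UH_val_max {B : {set E}} {q : endpoint E} {y : E} :
  is_UH rk B q -> y \in B -> ell y <= ell q.1.
Proof.
case: q => b c [/= -> _ qmax] yB.
exact: (rank_le_val (y, false) (b, false) (qmax y yB)).
Qed.

Lemma set_prec_handles {A B : {set E}} {p q : endpoint E} :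
  is_LH rk A p -> is_UH rk B q -> set_prec ell r A B <-> (rk p < rk q)%N.
Proof.
move=> hp hq; case: (hp) => p2 pA _; case: (hq) => q2 qB _.
case: hrk => _ rk_lt rk_tie.
case: p p2 pA hp => a _ /= -> aA hp; case: q q2 qB hq => b _ /= -> bB hq.
split.
- case=> [x [y [xA yB xy]]].
  have ab : r a <= ell b.
    apply: le_trans (LH_val_min hp xA) _.
    exact: le_trans xy (UH_val_max hq yB).
  move: ab; rewrite le_eqVlt => /orP[/eqP eab | lab].
    exact: (rk_tie (a, true) (b, false)).
  exact: (rk_lt (a, true) (b, false)).
- move=> ab; exists a, b; split => //; rewrite /ivl_prec.
  exact: (rank_le_val (a, true) (b, false) (ltnW ab)).
Qed.


Section Minimality.

Context {k : nat} {I : 'I_k -> {set E}} {LH UH : 'I_k -> endpoint E}.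
Hypotheses (hLH : forall i, is_LH rk (I i) (LH i))
           (hUH : forall i, is_UH rk (I i) (UH i)).

Lemma minimal_iff_no_LH_before (t : 'I_k) :
  minimal_in ell r I t <-> ~ exists s, s != t /\ (rk (LH s) < rk (UH t))%N.
Proof.
have precE s := set_prec_handles (hLH s) (hUH t).
by split=> notprec [s [st lt_st]]; apply: notprec; exists s; split => //;
  apply/precE.
Qed.

Lemma not_minimal_of_LH_before (s t : 'I_k) :
  s != t -> (rk (LH s) < rk (UH t))%N -> ~ minimal_in ell r I t.
Proof. by move=> st lt_st /minimal_iff_no_LH_before; apply; exists s. Qed.

Lemma minimal_of_UH_first (t : 'I_k) :
  (forall s, s != t -> (rk (UH t) < rk (LH s))%N) -> minimal_in ell r I t.
Proof.
move=> UH_first; apply/minimal_iff_no_LH_before => -[s [st lt_st]].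
by have := UH_first s st; rewrite ltnNge (ltnW lt_st).
Qed.

Lemma LH_UH_rank_neq (s t : 'I_k) : rk (LH s) <> rk (UH t).
Proof.
by case: (hLH s) => L2 _ _; case: (hUH t) => U2 _ _;
  apply: rank_right_left_neq.
Qed.

End Minimality.

End Handles.

Theorem mainTheorem7
  (R : realFieldType) (E : finType) (ell r : E -> R)
  (hI : forall a, ell a < r a)
  (rk : endpoint E -> nat) (hrk : lessdot_rank ell r rk)
  (k : nat) (hk : (2 <= k)%N) (I : 'I_k -> {set E})
  (hne : forall i, I i != set0)
  (LH UH : 'I_k -> endpoint E)
  (hLH : forall i, is_LH rk (I i) (LH i))
  (hUH : forall i, is_UH rk (I i) (UH i))
  (hdistL : injective LH) (hdistU : injective UH) :
  (* (i) *)
  (forall i j, i != j ->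
     (forall t, t != i -> t != j -> (rk (LH i) < rk (LH t))%N /\ (rk (LH j) < rk (LH t))%N) ->
     (forall t, (rk (LH i) < rk (UH t))%N /\ (rk (LH j) < rk (UH t))%N) ->
     forall t, ~ minimal_in ell r I t)
  /\
  (* (ii) *)
  (forall i,
     (forall t, t != i -> (rk (LH i) < rk (LH t))%N) ->
     (forall t, (rk (LH i) < rk (UH t))%N) ->
     (forall t, t != i -> ~ minimal_in ell r I t) /\
     (minimal_in ell r I i <->
        ~ exists j, j != i /\ (rk (LH j) < rk (UH i))%N))
  /\
  (* (iii) *)
  (forall (S : {set 'I_k}) (j : 'I_k),
     S != set0 ->
     (forall t, t != j -> (rk (LH j) < rk (LH t))%N) ->
     (forall t, (t \in S) <-> (rk (UH t) < rk (LH j))%N) ->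
     (forall t, t \in S -> minimal_in ell r I t) /\
     (minimal_in ell r I j <->
        ~ exists t, t != j /\ (rk (LH t) < rk (UH j))%N) /\
     (forall t, t \notin S -> t != j -> ~ minimal_in ell r I t)).
Proof.
have minE := minimal_iff_no_LH_before hrk hLH hUH.
have notmin := not_minimal_of_LH_before hrk hLH hUH.
split; [|split].
- (* (i): I_t is beaten by whichever of I_i, I_j differs from t. *)
  move=> i j ij _ LH_first t.
  case: (eqVneq t i) => [-> | ti].
    by apply: (notmin j); [rewrite eq_sym | case: (LH_first i)].
  by apply: (notmin i); [rewrite eq_sym | case: (LH_first t)].
- (* (ii): LH(I_i) precedes every other upper handle. *)
  move=> i _ LH_first; split; last exact: minE.
  by move=> t ti; apply: (notmin i); [rewrite eq_sym | apply: LH_first].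
- move=> S j _ LHj_first inS; split; [|split].
  + (* upper handles of the initial block precede all lower handles *)
    move=> t tS; apply: (minimal_of_UH_first hrk hLH hUH) => s st.
    have UHt_first := (inS t).1 tS.
    case: (eqVneq s j) => [-> // | sj].
    exact: ltn_trans UHt_first (LHj_first s sj).
  + exact: minE.
  + (* an upper handle outside the initial block comes after LH(I_j) *)
    move=> t tS tj; apply: (notmin j); first by rewrite eq_sym.
    have UHt_later : ~ (rk (UH t) < rk (LH j))%N.
      by move=> /inS tS'; rewrite tS' in tS.
    have LHj_UHt_neq := LH_UH_rank_neq hrk hLH hUH j t.
    by rewrite ltn_neqAle leqNgt; apply/andP; split; [apply/eqP | apply/negP].
Qed.
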